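(* Let $r\geq 3$ and let $D$ be an $m$-colored semicomplete $r$-partite digraph, and let $x,y$ be distinct vertices of $D$. Suppose there exists a directed path from $x$ to $y$ in $D$ that uses exactly $k$ colors for some $k\geq 4$, and suppose there is no directed path from $y$ to $x$ in $D$ using at most $4$ colors. Then $d(x,y)\leq 2$.
   Context: A semicomplete $r$-partite digraph ($r\ge 2$) is a digraph whose vertex set is partitioned into $r$ nonempty independent sets (partite sets) such that for any two vertices $u,v$ in different partite sets at least one of the arcs $(u,v)$, $(v,u)$ is present (both may be present); there are no arcs inside a partite set. An $m$-colored digraph is a digraph whose arcs are each assigned one of $m$ colors. A directed path (no repeated vertices) is $j$-colored if its arcs use exactly $j$ distinct colors; it uses at most $k$ colors if it is $j$-colored for some $1\le j\le k$. $d(x,y)$ denotes the minimum number of arcs of a directed path from $x$ to $y$. *)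

From mathcomp Require Import all_boot.
Set Implicit Arguments. Unset Strict Implicit. Unset Printing Implicit Defensive.

Definition semicomplete_multipartite (V : finType) (r : nat)
    (arc : rel V) (part : V -> 'I_r) : Prop :=
  [/\ (forall i : 'I_r, exists v : V, part v = i),
      (forall u v : V, part u = part v -> ~~ arc u v)
    & (forall u v : V, part u != part v -> arc u v || arc v u)].

(* A directed path from x to y: vertex sequence x :: p, consecutive vertices
   joined by arcs, ending at y, with no repeated vertex.  Its number of arcs
   is size p. *)
Definition is_dpath (V : finType) (arc : rel V) (x y : V) (p : seq V) : bool :=
  [&& path arc x p, last x p == y & uniq (x :: p)].

Definition path_colors (V : finType) (m : nat) (col : V -> V -> 'I_m)
    (x : V) (p : seq V) : seq 'I_m :=
  undup [seq col e.1 e.2 | e <- zip (x :: p) p].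

Definition ncolors (V : finType) (m : nat) (col : V -> V -> 'I_m)
    (x : V) (p : seq V) : nat := size (path_colors col x p).

From mathcomp Require Import all_boot.

Set Implicit Arguments.
Unset Strict Implicit.
Unset Printing Implicit Defensive.

(* Suppose d(x,y) > 2 and there is no y-x path with at most four
   colors.  Since a path with j >= 1 arcs uses between 1 and j colors, there is
   no y-x path, hence (removing loops) no y-x walk, with at most four arcs.
   So the arc yx is missing and x, y lie in the same partite set.  Call a
   vertex a good if it lies outside the part of x and the arc ya is present:
   - every out-neighbour of x is good (otherwise x -> v -> y);
   - a good vertex has no arc to y (otherwise y -> a -> x);
   - an out-neighbour of a good vertex outside the part of x is good
     (otherwise y -> a -> b -> x);
   - two steps from a good vertex through the part of x reach a good vertex
     (otherwise y -> a -> b -> c -> x).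
   Along any x-y walk these facts keep us on good vertices until the end, but
   y is not good; so no x-y walk exists, contradicting the hypothesis. *)

Lemma ncolors_between (V : finType) (m : nat) (col : V -> V -> 'I_m)
    (x : V) (p : seq V) :
  0 < size p -> 0 < ncolors col x p <= size p.
Proof.
rewrite /ncolors /path_colors; set s := [seq _ | _ <- _].
have size_s : size s = size p.
  by rewrite size_map size_zip /=; apply/minn_idPr; exact: leqnSn.
rewrite -size_s size_undup andbT; case: s {size_s} => // e s _.
have : e \in undup (e :: s) by rewrite mem_undup mem_head.
by case: undup.
Qed.

Lemma walk_to_dpath (V : finType) (arc : rel V) (y x : V) (q : seq V) :
  path arc y q -> last y q = x ->
  exists2 p, is_dpath arc y x p & size p <= size q.
Proof.
move=> walk_q <-; case: (shortenP walk_q) => p path_p uniq_p sub_pq.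
exists p; first by rewrite /is_dpath path_p eqxx uniq_p.
by apply: uniq_leq_size => //; case/andP: uniq_p.
Qed.

Lemma few_colors_return (V : finType) (m : nat) (arc : rel V)
    (col : V -> V -> 'I_m) (y x : V) (q : seq V) :
  y != x -> path arc y q -> last y q = x -> size q <= 4 ->
  exists p, is_dpath arc y x p /\ 0 < ncolors col y p <= 4.
Proof.
move=> y_neq_x walk_q last_q size_q.
have [p dpath_p size_p] := walk_to_dpath walk_q last_q.
exists p; split => //.
have p_gt0 : 0 < size p.
  by case: p dpath_p {size_p} => // /and3P[_ /eqP /= y_x _]; rewrite y_x eqxx in y_neq_x.
have /andP[-> ncol_le] := ncolors_between col y p_gt0.
exact: leq_trans ncol_le (leq_trans size_p size_q).
Qed.

Lemma arc_part_neq (V : finType) (r : nat) (arc : rel V) (part : V -> 'I_r)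
    (u v : V) :
  semicomplete_multipartite arc part -> arc u v -> part u != part v.
Proof. by case=> _ indep _ uv; apply/eqP => /indep; rewrite uv. Qed.

Section FarApart.

Variables (V : finType) (r : nat) (arc : rel V) (part : V -> 'I_r) (x y : V).
Hypothesis D_smp : semicomplete_multipartite arc part.

(* d(x,y) > 2: neither an arc nor a path of length two from x to y ... *)
Hypothesis no_arc_xy : ~~ arc x y.
Hypothesis no_2path_xy : forall w, arc x w -> ~~ arc w y.
Hypothesis no_short_return :
  forall q, path arc y q -> last y q = x -> size q <= 4 -> False.

Let semi (u v : V) : part u != part v -> arc u v || arc v u.
Proof. by case: D_smp => _ _; apply. Qed.

Lemma no_arc_yx : ~~ arc y x.
Proof. by apply/negP => yx; apply: (@no_short_return [:: x]) => //=; rewrite yx. Qed.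

Lemma part_y : part y = part x.
Proof.
by apply/eqP; apply: contraT => /semi; rewrite (negbTE no_arc_xy) (negbTE no_arc_yx).
Qed.

(* The vertices that a walk from x to y is forced to stay on. *)
Definition good (a : V) : bool := (part a != part x) && arc y a.

Lemma into_y_and_x w : part w != part x -> ~~ arc y w -> arc w y && arc w x.
Proof.
move=> w_out not_yw.
have wy : arc w y by move: (@semi w y); rewrite part_y (negbTE not_yw) orbF; apply.
rewrite wy /=; case/orP: (semi w_out) => // xw.
by have := no_2path_xy xw; rewrite wy.
Qed.

Lemma good_neq_y a : good a -> a != y.
Proof. by apply: contraTneq => ->; rewrite /good part_y eqxx. Qed.

Lemma good_from_x v : arc x v -> good v.
Proof.
move=> xv; have v_out : part v != part x by rewrite eq_sym; apply: arc_part_neq xv.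
rewrite /good v_out /=; apply/negPn/negP => /(into_y_and_x v_out) /andP[vy _].
by have := no_2path_xy xv; rewrite vy.
Qed.

Lemma good_not_into_y a : good a -> ~~ arc a y.
Proof.
case/andP=> a_out ya; apply/negP => ay.
have ax : arc a x by case/orP: (semi a_out) => // xa; have := no_2path_xy xa; rewrite ay.
by apply: (@no_short_return [:: a; x]) => //=; rewrite ya ax.
Qed.

Lemma good_step_out a b : good a -> arc a b -> part b != part x -> good b.
Proof.
case/andP=> _ ya ab b_out; rewrite /good b_out /=.
apply/negPn/negP => /(into_y_and_x b_out) /andP[_ bx].
by apply: (@no_short_return [:: a; b; x]) => //=; rewrite ya ab bx.
Qed.

Lemma good_step_through a b c :
  good a -> arc a b -> part b = part x -> arc b c -> good c.
Proof.
case/andP=> _ ya ab b_in bc.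
have c_out : part c != part x by rewrite -b_in eq_sym; apply: arc_part_neq bc.
rewrite /good c_out /=; apply/negPn/negP => /(into_y_and_x c_out) /andP[_ cx].
by apply: (@no_short_return [:: a; b; c; x]) => //=; rewrite ya ab bc cx.
Qed.

Lemma good_walk_avoids_y n a q :
  size q <= n -> good a -> path arc a q -> last a q != y.
Proof.
elim: n a q => [|n IHn] a [|b q] //= size_q good_a; try by rewrite good_neq_y.
case/andP=> ab walk_q; case: (eqVneq (part b) (part x)) => b_in; last first.
  by apply: IHn walk_q; last exact: good_step_out good_a ab b_in.
case: q size_q walk_q => [|c q] /= size_q.
  by move=> _; apply/eqP => b_y; have := good_not_into_y good_a; rewrite -b_y ab.
case/andP=> bc walk_q; apply: IHn walk_q; first exact: ltnW.
exact: good_step_through good_a ab b_in bc.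
Qed.

Lemma no_walk_xy q : path arc x q -> last x q != y.
Proof.
case: q => [|v q] /=.
  by move=> _; apply/eqP => x_y; apply: (@no_short_return [::]) => //=; rewrite x_y.
by case/andP=> xv; apply: (@good_walk_avoids_y (size q) v q) => //; exact: good_from_x xv.
Qed.

End FarApart.

Theorem mainTheorem1 (V : finType) (r m : nat) (arc : rel V) (part : V -> 'I_r)
    (col : V -> V -> 'I_m) (x y : V) :
  3 <= r ->
  semicomplete_multipartite arc part ->
  x != y ->
  (exists k : nat, 4 <= k /\
     exists p : seq V, is_dpath arc x y p /\ ncolors col x p = k) ->
  ~ (exists p : seq V, is_dpath arc y x p /\ 1 <= ncolors col y p <= 4) ->
  exists p : seq V, is_dpath arc x y p /\ size p <= 2.
Proof.
move=> _ D_smp x_neq_y [_ [_ [p [/and3P[walk_p last_p _] _]]]] no_few_colors.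
have [xy | no_arc_xy] := boolP (arc x y).
  by exists [:: y]; rewrite /is_dpath /= xy inE eqxx (negbTE x_neq_y).
have [/existsP[w /andP[xw wy]] | no_2path] := boolP [exists w, arc x w && arc w y].
  have [xw_neq wy_neq] := (arc_part_neq D_smp xw, arc_part_neq D_smp wy).
  exists [:: w; y]; rewrite /is_dpath /= xw wy eqxx !inE negb_or x_neq_y.
  by rewrite (contraNneq _ xw_neq) ?(contraNneq _ wy_neq) // => ->.
exfalso; move: last_p; apply/negP; apply: (no_walk_xy D_smp no_arc_xy) walk_p.
- by move=> w xw; apply: contraNN no_2path => wy; apply/existsP; exists w; rewrite xw.
- move=> q walk_q last_q size_q.
  by apply: no_few_colors; apply: few_colors_return walk_q last_q size_q; rewrite eq_sym.
Qed.
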